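(* Under the hypotheses below, define for $r,r'\in C$ the two-layer transfer matrices $\mathbf T(r,r'):=T^{[0]}(r)\,T^{[1]}(r')$ and $\dot{\mathbf T}(r,r'):=\dot T^{[0]}(r)\,\dot T^{[1]}(r')$, operators on $W=\bigotimes_{l,m}V_{(1_l2_m)}$. If there exists $(t,t')\in C^2$ such that $\dot{\mathbf T}(t,t')$ is diagonalizable with pairwise distinct eigenvalues, then $[\mathbf T(r,r'),\mathbf T(s,s')]=0$ for all $(r,r'),(s,s')\in C^2$.
   Context: Let $V$ be a finite-dimensional complex vector space and $C$ a set (of spectral parameters). Let $R,\dot R,\ddot R,\dddot R:\mathbb{Z}/2\mathbb{Z}\times C^3\to\mathrm{End}(V\otimes V\otimes V)$ be maps; write $X^{[\sigma]}(r_1,r_2,r_3)$ for the value of $X\in\{R,\dot R,\ddot R,\dddot R\}$ at $(\sigma,r_1,r_2,r_3)$. Superscript colors $[\sigma]$ are always read modulo 2. Notation: consider a finite totally ordered set of ''planes'', each plane $\alpha$ carrying a parameter $r_\alpha\in C$. For each pair $\alpha<\beta$ let $V_{(\alpha\beta)}$ be a copy of $V$. For $\alpha<\beta<\gamma$, $X^{[\sigma]}_{(\alpha\beta\gamma)}$ denotes the operator on the tensor product of all the spaces $V_{(\cdot\cdot)}$ under consideration that acts as $X^{[\sigma]}(r_\alpha,r_\beta,r_\gamma)$ on $V_{(\alpha\beta)}\otimes V_{(\alpha\gamma)}\otimes V_{(\beta\gamma)}$ (in this order) and as the identity on all other factors. Bicolored tetrahedron equations (BTE$[\sigma]$): for any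 four planes $1<2<3<4$ with arbitrary parameters $r_1,r_2,r_3,r_4\in C$, on $V_{(12)}\otimes V_{(13)}\otimes V_{(14)}\otimes V_{(23)}\otimes V_{(24)}\otimes V_{(34)}$, $$R^{[\sigma]}_{(123)}\dot R^{[\sigma+1]}_{(124)}\ddot R^{[\sigma]}_{(134)}\dddot R^{[\sigma+1]}_{(234)}=\dddot R^{[\sigma]}_{(234)}\ddot R^{[\sigma+1]}_{(134)}\dot R^{[\sigma]}_{(124)}R^{[\sigma+1]}_{(123)}.$$ Fix integers $L,M\ge1$, planes $1_1<\dots<1_{2L}<2_1<\dots<2_{2M}$ with fixed arbitrary parameters $r_{1_l},r_{2_m}\in C$. Trace reduction: for planes $\alpha<\beta$ larger than all $1_l$, define $$\mathbf{R}^{[\sigma]}_{\alpha\beta}:=\mathrm{Tr}_{V_{(\alpha\beta)}}\Bigl(R^{[\sigma+1]}_{(1_1\alpha\beta)}R^{[\sigma+2]}_{(1_2\alpha\beta)}\cdots R^{[\sigma+2L]}_{(1_{2L}\alpha\beta)}\Bigr)$$ (partial trace over $V_{(\alpha\beta)}$), an operator on $\bigotimes_l(V_{(1_l\alpha)}\otimes V_{(1_l\beta)})$; $\dot{\mathbf R},\ddot{\mathbf R}$ are defined likewise from $\dot R,\ddot R$. Layer transfer matrix: for $r\in C$, let $3$ be an extra plane larger than all $2_m$ with parameter $r_3=r$, and set $$T^{[\sigma]}(r):=\mathrm{Tr}_{\bigotimes_l V_{(1_l3)}}\Bigl(\mathbf R^{[\sigma+1]}_{2_1 3}\,\mathbf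 R^{[\sigma+2]}_{2_2 3}\cdots\mathbf R^{[\sigma+2M]}_{2_{2M}3}\Bigr),$$ an operator on $W=\bigotimes_{l,m}V_{(1_l2_m)}$ (it depends only on $r$, not on the label of the extra plane). $\dot T^{[\sigma]}(r)$ is defined the same way with $\mathbf R$ replaced by $\dot{\mathbf R}$. Standing hypotheses: $R,\dot R,\ddot R,\dddot R$ satisfy BTE$[\sigma]$ for both $\sigma\in\mathbb{Z}/2\mathbb{Z}$ and all parameters; $\dddot R^{[\sigma]}(r_1,r_2,r_3)$ is invertible for all $\sigma$ and all $r_1,r_2,r_3\in C$; and for every $\sigma$ and all parameters of two planes $3<4$ larger than all $1_l,2_m$, the trace reduction $\ddot{\mathbf R}^{[\sigma]}_{34}$ is invertible. *)

From HB Require Import structures.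
From mathcomp Require Import all_boot all_order all_algebra.
From mathcomp Require Import complex.
From mathcomp Require Import reals.
Set Implicit Arguments. Unset Strict Implicit. Unset Printing Implicit Defensive.
Import Order.TTheory GRing.Theory Num.Theory.
Local Open Scope ring_scope.

(* For a finite set S of "space labels", the tensor product of copies of V  *)
(* indexed by S has the standard basis {ffun S -> 'I_d}; an operator on it  *)
(* is a square matrix indexed (via enum_rank) by this basis.                *)

Definition tens (d : nat) (S : finType) := {ffun S -> 'I_d}.
Definition dimT (d : nat) (S : finType) : nat := #|{: tens d S}|.
Definition Op (F : fieldType) (d : nat) (S : finType) := 'M[F]_(dimT d S).

Definition ent (F : fieldType) d (S : finType) (A : Op F d S) (x y : tens d S) : F :=
  A (enum_rank x) (enum_rank y).

Definition opmx (F : fieldType) d (S : finType) (f : tens d S -> tens d S -> F)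
  : Op F d S := \matrix_(i, j) f (enum_val i) (enum_val j).

(* Embedding of an operator X acting on the factors labelled by S' into the  *)
(* tensor product over S, via the (injective) placement map e : S' -> S:     *)
(* it acts as X on the factors e s' (in the order of S') and as the identity *)
(* on all the other factors.                                                 *)
Definition embed (F : fieldType) d (S' S : finType) (e : S' -> S) (X : Op F d S')
  : Op F d S :=
  opmx (fun x y : tens d S =>
          ent X [ffun s' => x (e s')] [ffun s' => y (e s')]
          * (if [forall s, (s \notin codom e) ==> (x s == y s)] then 1 else 0)).

Definition tjoin d (S1 S2 : finType) (x : tens d S1) (z : tens d S2) : tens d (S1 + S2)%type :=
  [ffun s => match s with inl a => x a | inr b => z b end].

Definition ptrace (F : fieldType) d (S1 S2 : finType) (A : Op F d (S1 + S2)%type) : Op F d S1 :=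
  opmx (fun x y : tens d S1 => \sum_(z : tens d S2) ent A (tjoin x z) (tjoin y z)).

(* colors in Z/2Z are booleans: color sigma + k (mod 2) *)
Definition colr (s : bool) (k : nat) : bool := s (+) odd k.

(* A family X^{[sigma]}(r1,r2,r3) of operators on V (x) V (x) V, with      *)
(* spectral parameters r1 r2 r3 in an arbitrary set P (the paper's C).      *)
Definition opfamily (F : fieldType) d (P : Type) :=
  bool -> P -> P -> P -> Op F d 'I_3.

(* Bicolored tetrahedron equation.  Planes 1<2<3<4; the six spaces V_(ab)   *)
(* are labelled by 'I_6 as                                                  *)
(*   (12) = 0, (13) = 1, (14) = 2, (23) = 3, (24) = 4, (34) = 5.            *)

Definition tri (n : nat) (a b c : 'I_n) : 'I_3 -> 'I_n :=
  fun i => match val i with 0 => a | 1 => b | _ => c end.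

Definition i6 (k : nat) : 'I_6 := inord k.

(* X_(123) on V_(12) V_(13) V_(23), X_(124) on V_(12) V_(14) V_(24), etc.   *)
Definition at123 F d (X : Op F d 'I_3) : Op F d 'I_6 := embed (tri (i6 0) (i6 1) (i6 3)) X.
Definition at124 F d (X : Op F d 'I_3) : Op F d 'I_6 := embed (tri (i6 0) (i6 2) (i6 4)) X.
Definition at134 F d (X : Op F d 'I_3) : Op F d 'I_6 := embed (tri (i6 1) (i6 2) (i6 5)) X.
Definition at234 F d (X : Op F d 'I_3) : Op F d 'I_6 := embed (tri (i6 3) (i6 4) (i6 5)) X.

Definition BTE (F : fieldType) d (P : Type) (R Rd Rdd Rddd : opfamily F d P)
    (s : bool) : Prop :=
  forall r1 r2 r3 r4 : P,
    at123 (R s r1 r2 r3) *m at124 (Rd (~~ s) r1 r2 r4)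
      *m at134 (Rdd s r1 r3 r4) *m at234 (Rddd (~~ s) r2 r3 r4)
    = at234 (Rddd s r2 r3 r4) *m at134 (Rdd (~~ s) r1 r3 r4)
      *m at124 (Rd s r1 r2 r4) *m at123 (R (~~ s) r1 r2 r3).

(* Trace reduction.  Planes 1_1 < ... < 1_(2L) (parameters r1 : 'I_(2L) -> P)*)
(* and alpha < beta above them.  Spaces of R_(1_l alpha beta) are           *)
(*   V_(1_l alpha) = inl (inl l),  V_(1_l beta) = inl (inr l),              *)
(*   V_(alpha beta) = inr tt.                                               *)
(* The result acts on (x)_l (V_(1_l alpha) (x) V_(1_l beta)), labelled by   *)
(* 'I_(2L) + 'I_(2L) (inl l = (1_l alpha), inr l = (1_l beta)).             *)
(* Factor l (0-based) carries the color sigma + (l+1).                      *)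

Definition placeR (L : nat) (l : 'I_(2 * L)) : 'I_3 -> ('I_(2 * L) + 'I_(2 * L)) + unit :=
  fun i => match val i with 0 => inl (inl l) | 1 => inl (inr l) | _ => inr tt end.

Definition traceRed (F : fieldType) d (L : nat) (P : Type) (X : opfamily F d P) (s : bool)
    (r1 : 'I_(2 * L) -> P) (ra rb : P) : Op F d ('I_(2 * L) + 'I_(2 * L))%type :=
  ptrace (\big[mulmx/1%:M]_(l < 2 * L)
             embed (placeR l) (X (colr s l.+1) (r1 l) ra rb)).

(* Layer transfer matrix.  Planes 2_1 < ... < 2_(2M) (parameters r2) and an  *)
(* extra plane 3 with parameter r.  Labels of the big space:                *)
(*   V_(1_l 2_m) = inl (l, m)   (these form W),                              *)
(*   V_(1_l 3)   = inr l        (traced out).                                *)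
(* boldR_(2_m 3) acts on (x)_l (V_(1_l 2_m) (x) V_(1_l 3)).                  *)

Definition placeT (L M : nat) (m : 'I_(2 * M)) :
    'I_(2 * L) + 'I_(2 * L) -> ('I_(2 * L) * 'I_(2 * M)) + 'I_(2 * L) :=
  fun i => match i with inl l => inl (l, m) | inr l => inr l end.

Definition layerT (F : fieldType) d (L M : nat) (P : Type) (X : opfamily F d P) (s : bool)
    (r1 : 'I_(2 * L) -> P) (r2 : 'I_(2 * M) -> P) (r : P)
    : Op F d ('I_(2 * L) * 'I_(2 * M))%type :=
  ptrace (\big[mulmx/1%:M]_(m < 2 * M)
             embed (@placeT L M m) (traceRed X (colr s m.+1) r1 (r2 m) r)).

Definition twoLayerT (F : fieldType) d (L M : nat) (P : Type) (X : opfamily F d P)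
    (r1 : 'I_(2 * L) -> P) (r2 : 'I_(2 * M) -> P) (r r' : P)
    : Op F d ('I_(2 * L) * 'I_(2 * M))%type :=
  layerT X false r1 r2 r *m layerT X true r1 r2 r'.

Definition diag_simple (F : fieldType) (n : nat) (A : 'M[F]_n) : Prop :=
  diagonalizable A /\
  exists s : seq F, [/\ size s = n, uniq s & all (eigenvalue A) s].

Definition Cx (R : realType) : fieldType := R[i].

From HB Require Import structures.
From mathcomp Require Import all_boot all_order all_algebra.
From mathcomp Require Import complex reals.
Set Implicit Arguments. Unset Strict Implicit. Unset Printing Implicit Defensive.
Import Order.TTheory GRing.Theory Num.Theory.
Local Open Scope ring_scope.

(* Each plane 1_l contributes one bicolored tetrahedron equation for the planes 1_l < a < b < c,
   R_(1ab) R'_(1ac) R''_(1bc) R'''_(abc) = R'''_(abc) R''_(1bc) R'_(1ac) R_(1ab) with alternating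
   colors.  Multiplying these equations over l, the invertible R''' factors, which act only on
   V_(ab), V_(ac), V_(bc), telescope; since there is an even number of planes 1_l the two outer
   ones agree and disappear under the partial trace over these three spaces.  This gives the
   exchange relation  RR_ab RR'_ac RR''_bc = RR''_bc RR'_ac RR_ab  for the trace reductions.
   Repeating the argument one level up, with the invertible trace reductions RR'' as gauge
   factors, gives T^[s](r) T'^[s+1](r') = T'^[s](r') T^[s+1](r) for the layer transfer
   matrices, so every two-layer matrix T(r, r') commutes with every T'(t, t').  If T'(t, t') has
   simple spectrum, everything commuting with it is diagonal in its eigenbasis, so the T(r, r')
   commute with each other. *)

(** * Ordered products of matrices *)

HB.instance Definition _ (F : fieldType) (n : nat) :=
  Monoid.isLaw.Build 'M[F]_n 1%:M mulmx (@mulmxA F n n n n) (@mul1mx F n n) (@mulmx1 F n n).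

Section OrderedProducts.
Variables (F : fieldType) (k : nat).

Lemma prod_mulmx_comm n (X : 'I_n -> 'M[F]_k) (Z : 'M[F]_k) :
  (forall i, X i *m Z = Z *m X i) ->
  (\big[mulmx/1%:M]_(i < n) X i) *m Z = Z *m \big[mulmx/1%:M]_(i < n) X i.
Proof.
elim: n X => [|n IH] X h; first by rewrite big_ord0 mul1mx mulmx1.
rewrite big_ord_recr /= -mulmxA h mulmxA.
by rewrite (IH (fun i => X (widen_ord (leqnSn n) i))) // mulmxA.
Qed.

Lemma prod_mulmx_split n (X Y : 'I_n -> 'M[F]_k) :
  (forall i j : 'I_n, (i < j)%N -> Y i *m X j = X j *m Y i) ->
  \big[mulmx/1%:M]_(i < n) (X i *m Y i) =
  (\big[mulmx/1%:M]_(i < n) X i) *m \big[mulmx/1%:M]_(i < n) Y i.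
Proof.
elim: n X Y => [|n IH] X Y h; first by rewrite !big_ord0 mulmx1.
pose w := widen_ord (leqnSn n).
rewrite !big_ord_recr /= (IH (fun i => X (w i)) (fun i => Y (w i))); last by move=> i j ?; apply: h.
rewrite -!mulmxA; congr (_ *m _); rewrite !mulmxA; congr (_ *m _).
by apply: prod_mulmx_comm => i /=; rewrite h //= ltn_ord.
Qed.

Lemma prod_mulmx_telescope n (X Y : 'I_n -> 'M[F]_k) (D : nat -> 'M[F]_k) :
  (forall i, D i \in unitmx) ->
  (forall i : 'I_n, X i *m D i.+1 = D i *m Y i) ->
  \big[mulmx/1%:M]_(i < n) X i = D 0%N *m (\big[mulmx/1%:M]_(i < n) Y i) *m invmx (D n).
Proof.
move=> hD; elim: n X Y => [|n IH] X Y h; first by rewrite !big_ord0 mulmx1 mulmxV.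
pose w := widen_ord (leqnSn n).
rewrite !big_ord_recr /= (IH (fun i => X (w i)) (fun i => Y (w i))) // -!mulmxA.
congr (_ *m (_ *m _)); rewrite -[X ord_max](mulmxK (hD n.+1)) h -mulmxA mulKmx //.
Qed.
End OrderedProducts.

(** * Operators commuting with a matrix of simple spectrum *)

Section SimpleSpectrum.
Variables (F : fieldType) (n : nat).

Lemma eigenvalue_diag_mx (a : 'rV[F]_n) x : eigenvalue (diag_mx a) x -> exists j, a 0 j = x.
Proof.
case/eigenvalueP=> v hv nv.
have [j vj|v0] := pickP (fun j => v 0 j != 0); last first.
  by case/negP: nv; apply/eqP/rowP => j; rewrite mxE; apply/eqP/negbFE/v0.
exists j; apply: (mulIf vj).
by have := congr1 (fun w : 'rV_n => w 0 j) hv; rewrite mul_mx_diag !mxE mulrC.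
Qed.

Lemma diag_of_comm_diag_mx (a : 'rV[F]_n) (X : 'M[F]_n) :
  injective (a 0) -> comm_mx (diag_mx a) X -> is_diag_mx X.
Proof.
move=> ainj aX; apply/is_diag_mxP => i j nij.
have := congr1 (fun Y : 'M_n => Y i j) aX; rewrite mul_mx_diag mul_diag_mx !mxE.
move/eqP; rewrite mulrC -subr_eq0 -mulrBr mulf_eq0 subr_eq0 => /orP[/eqP //|/eqP/ainj eij].
by rewrite eij eqxx in nij.
Qed.

Lemma diag_simple_conj (A : 'M[F]_n) : diag_simple A ->
  exists2 P, P \in unitmx & exists2 a : 'rV[F]_n, injective (a 0) & conjmx P A = diag_mx a.
Proof.
case=> -[P hP /diag_mxP[a PA]] [s [size_s uniq_s /allP eig_s]].
exists P => //; exists a => //.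
have eig_a x : x \in s -> x \in codom (a 0).
  move=> /eig_s eigA; have : eigenvalue (conjmx P A) x.
    apply: (eigenvalue_conjmx (V := invmx P)); rewrite ?stablemx_unit ?row_free_unit ?unitmx_inv //.
    by rewrite conjmxK.
  by rewrite PA => /eigenvalue_diag_mx[j <-]; apply: codom_f.
apply/injectiveP; apply: leq_size_uniq uniq_s eig_a _.
by rewrite size_codom card_ord size_s.
Qed.

Lemma diag_simple_comm (A B C : 'M[F]_n) :
  diag_simple A -> comm_mx A B -> comm_mx A C -> comm_mx B C.
Proof.
case/diag_simple_conj=> P hP [a ainj PA].
have conjM X Y : conjmx P (X *m Y) = conjmx P X *m conjmx P Y.
  by rewrite conjmxM // inE stablemx_unit.
have conj_diag X : comm_mx A X -> exists d, conjmx P X = diag_mx d.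
  move=> AX; apply/diag_mxP/(diag_of_comm_diag_mx ainj).
  by rewrite /comm_mx -PA -!conjM AX.
move=> /conj_diag[b PB] /conj_diag[c PC].
rewrite /comm_mx; apply: (can_inj (fun X => conjmxK X hP)).
by rewrite !conjM PB PC diag_mx_comm.
Qed.

End SimpleSpectrum.

(** * Operators on tensor products *)

Lemma sum_eq_single (F : fieldType) (T : finType) (G : T -> F) t0 :
  (forall t, t != t0 -> G t = 0) -> \sum_t G t = G t0.
Proof. by move=> h; rewrite (bigD1 t0) //= big1 ?addr0. Qed.

Lemma notin_codomP (T : finType) (T' : eqType) (f : T -> T') y :
  reflect (forall x, f x != y) (y \notin codom f).
Proof.
apply: (iffP idP) => [ny x|h]; first by apply: contraNneq ny => <-; exact: codom_f.
by apply/codomP => -[x exy]; case/eqP: (h x).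
Qed.

Definition map_sum (T1 T2 S1 S2 : Type) (i : T1 -> S1) (j : T2 -> S2) (t : T1 + T2) : S1 + S2 :=
  match t with inl a => inl (i a) | inr b => inr (j b) end.

Lemma map_sum_inj (T1 T2 S1 S2 : Type) (i : T1 -> S1) (j : T2 -> S2) :
  injective i -> injective j -> injective (map_sum i j).
Proof. by move=> i_inj j_inj [a|b] [a'|b'] //= [] => [/i_inj|/j_inj] ->. Qed.

Section TensorOperators.
Variables (F : fieldType) (d : nat).
Implicit Types S T : finType.

Lemma ent_opmx S (f : tens d S -> tens d S -> F) x y : ent (opmx f) x y = f x y.
Proof. by rewrite /ent /opmx mxE !enum_rankK. Qed.

Lemma entP S (A B : Op F d S) : (forall x y, ent A x y = ent B x y) -> A = B.
Proof.
move=> h; apply/matrixP => i j; have := h (enum_val i) (enum_val j).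
by rewrite /ent !enum_valK.
Qed.

Lemma ent_mulmx S (A B : Op F d S) x y : ent (A *m B) x y = \sum_z ent A x z * ent B z y.
Proof.
rewrite /ent mxE (reindex (@enum_rank (tens d S))) //=.
by apply: onW_bij; exact: enum_rank_bij.
Qed.

Lemma ent1 S x y : ent (1%:M : Op F d S) x y = (x == y)%:R.
Proof. by rewrite /ent mxE (inj_eq (@enum_rank_inj _)). Qed.

Lemma ent_trmx S (A : Op F d S) x y : ent A^T x y = ent A y x.
Proof. by rewrite /ent mxE. Qed.

Definition restr S' S (e : S' -> S) (x : tens d S) : tens d S' := [ffun s' => x (e s')].

Definition eq_off S' S (e : S' -> S) (x y : tens d S) : bool :=
  [forall s, (s \notin codom e) ==> (x s == y s)].

Lemma ent_embed S' S (e : S' -> S) (X : Op F d S') x y :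
  ent (embed e X) x y = ent X (restr e x) (restr e y) * (if eq_off e x y then 1 else 0).
Proof. exact: ent_opmx. Qed.

Lemma eq_offP S' S (e : S' -> S) (x y : tens d S) :
  reflect (forall s, (forall a, e a != s) -> x s = y s) (eq_off e x y).
Proof.
apply: (iffP forallP) => h s; last by apply/implyP => /notin_codomP/h->.
by move/notin_codomP/(implyP (h s))/eqP.
Qed.

Lemma eq_off_sym S' S (e : S' -> S) (x y : tens d S) : eq_off e x y = eq_off e y x.
Proof. by apply/eq_offP/eq_offP => h s /h. Qed.

Lemma eq_off_trans S' S (e : S' -> S) (x y z : tens d S) :
  eq_off e x z -> eq_off e z y = eq_off e x y.
Proof.
move/eq_offP=> xz; apply/eq_offP/eq_offP => h s hs; first by rewrite xz // h.
by rewrite -xz // h.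
Qed.

Lemma embed_ext S' S (e f : S' -> S) (X : Op F d S') : e =1 f -> embed e X = embed f X.
Proof.
move=> ef; apply: entP => x y; rewrite !ent_embed /eq_off (eq_codom ef).
by congr (ent X _ _ * _); apply/ffunP => s; rewrite !ffunE ef.
Qed.

Section InjectiveEmbedding.
Variables (S' S : finType) (e : S' -> S).
Hypothesis e_inj : injective e.

Definition upd (x : tens d S) (w : tens d S') : tens d S :=
  [ffun s => if [pick a | e a == s] is Some a then w a else x s].

Lemma restr_upd x w : restr e (upd x w) = w.
Proof.
apply/ffunP => a; rewrite !ffunE; case: pickP => [b /eqP/e_inj -> //|].
by move/(_ a); rewrite eqxx.
Qed.

Lemma eq_off_upd x w : eq_off e x (upd x w).
Proof.
apply/eq_offP => s es; rewrite ffunE; case: pickP => [b /eqP eb|//].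
by have := es b; rewrite eb eqxx.
Qed.

Lemma upd_restr x z : eq_off e x z -> upd x (restr e z) = z.
Proof.
move/eq_offP=> xz; apply/ffunP => s; rewrite !ffunE.
case: pickP => [a /eqP <-|ns]; first by rewrite ffunE.
by apply: xz => a; rewrite ns.
Qed.

Lemma embed_mulmx (X Y : Op F d S') : embed e (X *m Y) = embed e X *m embed e Y.
Proof.
apply: entP => x y; rewrite ent_embed !ent_mulmx.
rewrite (bigID (eq_off e x)) /= [X in _ = _ + X]big1 ?addr0; last first.
  by move=> z /negbTE xz; rewrite ent_embed xz mulr0 mul0r.
rewrite (reindex_onto (upd x) (restr e)) => [|z]; last exact: upd_restr.
rewrite mulr_suml; apply: eq_big => w; first by rewrite eq_off_upd restr_upd eqxx.
move=> _; rewrite !ent_embed restr_upd eq_off_upd (eq_off_trans _ (eq_off_upd _ _)).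
by case: (eq_off e x y); rewrite !(mulr1, mulr0).
Qed.

Lemma embed1 : embed e (1%:M : Op F d S') = 1%:M.
Proof.
apply: entP => x y; rewrite ent_embed !ent1.
have [<-|nxy] := eqVneq x y.
  have -> : eq_off e x x by apply/eq_offP.
  by rewrite eqxx mulr1.
have [exy|] := eqVneq (restr e x) (restr e y); last by rewrite mul0r.
case: ifP => [/eq_offP xy|]; last by rewrite mulr0.
case/eqP: nxy; apply/ffunP => s.
case: (pickP (fun a => e a == s)) => [a /eqP <-|ns]; last by apply: xy => a; rewrite ns.
by have := congr1 (fun w : tens d S' => w a) exy; rewrite !ffunE.
Qed.

Lemma embed_unitmx (X : Op F d S') : X \in unitmx -> embed e X \in unitmx.
Proof.
move=> uX; suff /mulmx1_unit[] : embed e X *m embed e (invmx X) = 1%:M by [].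
by rewrite -embed_mulmx mulmxV // embed1.
Qed.

Lemma embed_prod n (X : 'I_n -> Op F d S') :
  embed e (\big[mulmx/1%:M]_(i < n) X i) = \big[mulmx/1%:M]_(i < n) embed e (X i).
Proof. by apply: big_morph; [exact: embed_mulmx | exact: embed1]. Qed.

End InjectiveEmbedding.

Lemma restr_comp S1 S2 S3 (e1 : S1 -> S2) (e2 : S2 -> S3) (x : tens d S3) :
  restr e1 (restr e2 x) = restr (e2 \o e1) x.
Proof. by apply/ffunP => a; rewrite !ffunE. Qed.

Lemma embed_comp S1 S2 S3 (e1 : S1 -> S2) (e2 : S2 -> S3) (X : Op F d S1) :
  injective e2 -> embed e2 (embed e1 X) = embed (e2 \o e1) X.
Proof.
move=> e2_inj; apply: entP => x y; rewrite !ent_embed !restr_comp.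
suff <- : eq_off e1 (restr e2 x) (restr e2 y) && eq_off e2 x y = eq_off (e2 \o e1) x y.
  by case: (eq_off e1 _ _); case: (eq_off e2 x y); rewrite !(mulr1, mulr0).
apply/andP/eq_offP => [[/eq_offP h1 /eq_offP h2] s hs | h].
  have [b /eqP es|nb] := pickP (fun b => e2 b == s); last by apply: h2 => b; rewrite nb.
  rewrite -es; have := h1 b; rewrite !ffunE; apply => a; apply/eqP => eab.
  by move: (hs a); rewrite /= eab es eqxx.
split; apply/eq_offP; last by move=> s hs; apply: h => a; exact: hs (e1 a).
by move=> b hb; rewrite !ffunE; apply: h => a /=; rewrite (inj_eq e2_inj); exact: hb.
Qed.

Lemma prod_embed_comp (T S' S : finType) (f : S' -> S) n
    (h : 'I_n -> T -> S') (X : 'I_n -> Op F d T) :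
  injective f ->
  \big[mulmx/1%:M]_(i < n) embed (f \o h i) (X i) =
  embed f (\big[mulmx/1%:M]_(i < n) embed (h i) (X i)).
Proof. by move=> f_inj; rewrite embed_prod //; apply: eq_bigr => i _; rewrite embed_comp. Qed.

Lemma embed_id S (X : Op F d S) : embed id X = X.
Proof.
apply: entP => x y; rewrite ent_embed.
have rE (z : tens d S) : restr id z = z by apply/ffunP => s; rewrite ffunE.
have -> : eq_off id x y by apply/eq_offP => s /(_ s); rewrite eqxx.
by rewrite !rE mulr1.
Qed.

Lemma embed_trmx S' S (e : S' -> S) (X : Op F d S') : embed e X^T = (embed e X)^T.
Proof.
apply: entP => x y; rewrite ent_trmx !ent_embed ent_trmx.
by rewrite (eq_off_sym e x).
Qed.

Definition eq_off2 S1 S2 S (e : S1 -> S) (f : S2 -> S) (x y : tens d S) : bool :=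
  [forall s, (s \notin codom e) && (s \notin codom f) ==> (x s == y s)].

Lemma ent_embed_mulmx_disjoint S1 S2 S (e : S1 -> S) (f : S2 -> S)
    (X : Op F d S1) (Y : Op F d S2) x y :
  (forall a b, e a != f b) ->
  ent (embed e X *m embed f Y) x y =
  ent X (restr e x) (restr e y) * ent Y (restr f x) (restr f y) *
  (if eq_off2 e f x y then 1 else 0).
Proof.
move=> ef_disj; pose z0 : tens d S := [ffun s => if s \in codom e then y s else x s].
rewrite ent_mulmx (sum_eq_single (t0 := z0)) => [|z]; last first.
  rewrite !ent_embed; case: ifP => [/eq_offP xz|]; last by rewrite mulr0 mul0r.
  case: ifP => [/eq_offP zy|]; last by rewrite !mulr0.
  case/eqP; apply/ffunP => s; rewrite ffunE; case: codomP => [[a ->]|ns].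
    by apply: zy => b; rewrite eq_sym.
  by rewrite xz // => a; apply/eqP => eas; apply: ns; exists a.
have ez0 : restr e z0 = restr e y by apply/ffunP => a; rewrite !ffunE codom_f.
have fz0 : restr f z0 = restr f x.
  apply/ffunP => b; rewrite !ffunE; case: codomP => // -[a /eqP].
  by rewrite eq_sym (negbTE (ef_disj a b)).
have xz0 : eq_off e x z0.
  by apply/eq_offP => s ns; rewrite ffunE; case: codomP => // -[a eas]; case/eqP: (ns a).
rewrite !ent_embed ez0 fz0 xz0.
have -> : eq_off f z0 y = eq_off2 e f x y.
  apply/eq_offP/forallP => [h s|h s ns]; rewrite ?ffunE.
    apply/implyP => /andP[ne /notin_codomP nf]; apply/eqP.
    by rewrite -h ?ffunE ?(negbTE ne) // => b; rewrite eq_sym.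
  case: ifP => // /negbT ne; apply/eqP/(implyP (h s)); rewrite ne /=.
  exact/notin_codomP.
by case: eq_off2; rewrite !(mulr1, mulr0).
Qed.

Lemma embed_disjoint_comm S1 S2 S (e : S1 -> S) (f : S2 -> S)
    (X : Op F d S1) (Y : Op F d S2) :
  (forall a b, e a != f b) -> embed e X *m embed f Y = embed f Y *m embed e X.
Proof.
move=> ef_disj; apply: entP => x y; rewrite !ent_embed_mulmx_disjoint //; last first.
  by move=> b a; rewrite eq_sym.
have -> : eq_off2 f e x y = eq_off2 e f x y by apply: eq_forallb => s; rewrite andbC.
by rewrite [ent Y _ _ * _]mulrC.
Qed.

Section PartialTrace.
Variables (S1 S2 : finType).
Implicit Types (x v : tens d S1) (z u : tens d S2).

Lemma sum_tjoin (G : tens d (S1 + S2)%type -> F) : \sum_w G w = \sum_x \sum_z G (tjoin x z).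
Proof.
rewrite pair_bigA /= (reindex (fun p : tens d S1 * tens d S2 => tjoin p.1 p.2)) //.
apply: onW_bij; exists (fun w => (restr inl w, restr inr w)) => [[x z]|w].
  by congr (_, _); apply/ffunP => a; rewrite !ffunE.
by apply/ffunP => -[a|b]; rewrite !ffunE.
Qed.

Lemma restr_inl_tjoin x z : restr inl (tjoin x z) = x.
Proof. by apply/ffunP => a; rewrite !ffunE. Qed.

Lemma restr_inr_tjoin x z : restr inr (tjoin x z) = z.
Proof. by apply/ffunP => b; rewrite !ffunE. Qed.

Lemma eq_off_inl_tjoin x z v u : eq_off inl (tjoin x z) (tjoin v u) = (z == u).
Proof.
apply/eq_offP/eqP => [h|<-]; first by apply/ffunP => b; have := h (inr b); rewrite !ffunE; apply.
by case=> [a /(_ a)|b _]; rewrite ?eqxx // !ffunE.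
Qed.

Lemma eq_off_inr_tjoin x z v u : eq_off inr (tjoin x z) (tjoin v u) = (x == v).
Proof.
apply/eq_offP/eqP => [h|<-]; first by apply/ffunP => a; have := h (inl a); rewrite !ffunE; apply.
by case=> [a _|b /(_ b)]; rewrite ?eqxx // !ffunE.
Qed.

Lemma ent_ptrace (A : Op F d (S1 + S2)%type) x y :
  ent (ptrace A) x y = \sum_z ent A (tjoin x z) (tjoin y z).
Proof. exact: ent_opmx. Qed.

Lemma ptrace_trmx (A : Op F d (S1 + S2)%type) : ptrace A^T = (ptrace A)^T.
Proof.
by apply: entP => x y; rewrite ent_trmx !ent_ptrace; apply: eq_bigr => z; rewrite ent_trmx.
Qed.

Lemma ent_embed_inr (D : Op F d S2) x z v u :
  ent (embed inr D) (tjoin x z) (tjoin v u) = (x == v)%:R * ent D z u.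
Proof. by rewrite ent_embed !restr_inr_tjoin eq_off_inr_tjoin mulrC; case: eqP. Qed.

Lemma ptrace_embed_inrC (D : Op F d S2) (A : Op F d (S1 + S2)%type) :
  ptrace (embed inr D *m A) = ptrace (A *m embed inr D).
Proof.
apply: entP => x y; rewrite !ent_ptrace.
have ->: \sum_z ent (embed inr D *m A) (tjoin x z) (tjoin y z) =
         \sum_z \sum_u ent D z u * ent A (tjoin x u) (tjoin y z).
  apply: eq_bigr => z _; rewrite ent_mulmx sum_tjoin (sum_eq_single (t0 := x)) => [|v nv].
    by apply: eq_bigr => u _; rewrite ent_embed_inr eqxx mul1r.
  by apply: big1 => u _; rewrite ent_embed_inr eq_sym (negbTE nv) !mul0r.
rewrite exchange_big; apply: eq_bigr => u _; rewrite ent_mulmx sum_tjoin.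
rewrite (sum_eq_single (t0 := y)) => [|v nv]; last first.
  by apply: big1 => z _; rewrite ent_embed_inr (negbTE nv) mul0r mulr0.
by apply: eq_bigr => z _; rewrite ent_embed_inr eqxx mul1r mulrC.
Qed.

End PartialTrace.

Lemma ent_embed_map_sum T1 T2 S1 S2 (i : T1 -> S1) (j : T2 -> S2)
    (Y : Op F d (T1 + T2)%type) x z v u :
  ent (embed (map_sum i j) Y) (tjoin x z) (tjoin v u) =
  ent Y (tjoin (restr i x) (restr j z)) (tjoin (restr i v) (restr j u)) *
  (if eq_off i x v then 1 else 0) * (if eq_off j z u then 1 else 0).
Proof.
have rE x' z' : restr (map_sum i j) (tjoin x' z') = tjoin (restr i x') (restr j z').
  by apply/ffunP => -[a|b]; rewrite !ffunE.
rewrite ent_embed !rE -mulrA.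
suff -> : eq_off (map_sum i j) (tjoin x z) (tjoin v u) = eq_off i x v && eq_off j z u.
  by case: (eq_off i x v); case: (eq_off j z u); rewrite ?(mulr1, mulr0).
apply/eq_offP/andP => [h|[/eq_offP xv /eq_offP zu]].
  split; apply/eq_offP => s ns.
    by have := h (inl s); rewrite !ffunE; apply => -[a|b] //=; apply/eqP => -[/eqP]; apply/negP.
  by have := h (inr s); rewrite !ffunE; apply => -[a|b] //=; apply/eqP => -[/eqP]; apply/negP.
case=> [s|s] ns; rewrite !ffunE.
  by apply: xv => a; apply/eqP => eas; case/eqP: (ns (inl a)); rewrite /= eas.
by apply: zu => b; apply/eqP => ebs; case/eqP: (ns (inr b)); rewrite /= ebs.
Qed.

Section PartialTraceSplit.
Variables (U T1 T2 J1 J2 : finType) (i1 : T1 -> U) (i2 : T2 -> U).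
Variables (Y1 : Op F d (T1 + J1)%type) (Y2 : Op F d (T2 + J2)%type).

Let A := embed (map_sum i1 (@inl J1 J2)) Y1.
Let B := embed (map_sum i2 (@inr J1 J2)) Y2.

Lemma ent_embed_map_sum_inl x z1 z2 v u1 u2 :
  ent A (tjoin x (tjoin z1 z2)) (tjoin v (tjoin u1 u2)) =
  ent Y1 (tjoin (restr i1 x) z1) (tjoin (restr i1 v) u1) *
  (if eq_off i1 x v then 1 else 0) * (if z2 == u2 then 1 else 0).
Proof. by rewrite ent_embed_map_sum !restr_inl_tjoin eq_off_inl_tjoin. Qed.

Lemma ent_embed_map_sum_inr x z1 z2 v u1 u2 :
  ent B (tjoin x (tjoin z1 z2)) (tjoin v (tjoin u1 u2)) =
  ent Y2 (tjoin (restr i2 x) z2) (tjoin (restr i2 v) u2) *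
  (if eq_off i2 x v then 1 else 0) * (if z1 == u1 then 1 else 0).
Proof. by rewrite ent_embed_map_sum !restr_inr_tjoin eq_off_inr_tjoin. Qed.

Lemma ptrace_embed_mulmx_split :
  ptrace (A *m B) = embed i1 (ptrace Y1) *m embed i2 (ptrace Y2).
Proof.
apply: entP => x y; rewrite ent_ptrace sum_tjoin ent_mulmx.
have AB z1 z2 : ent (A *m B) (tjoin x (tjoin z1 z2)) (tjoin y (tjoin z1 z2)) =
    \sum_v ent Y1 (tjoin (restr i1 x) z1) (tjoin (restr i1 v) z1) *
            (if eq_off i1 x v then 1 else 0) *
          (ent Y2 (tjoin (restr i2 v) z2) (tjoin (restr i2 y) z2) *
            (if eq_off i2 v y then 1 else 0)).
  rewrite ent_mulmx sum_tjoin; apply: eq_bigr => v _; rewrite sum_tjoin.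
  rewrite (sum_eq_single (t0 := z1)) => [|u1 nu1]; last first.
    by apply: big1 => u2 _; rewrite ent_embed_map_sum_inr (negbTE nu1) !mulr0.
  rewrite (sum_eq_single (t0 := z2)) => [|u2 nu2]; last first.
    by rewrite ent_embed_map_sum_inl eq_sym (negbTE nu2) mulr0 mul0r.
  by rewrite ent_embed_map_sum_inl ent_embed_map_sum_inr !eqxx !mulr1.
under eq_bigr => z1 _ do under eq_bigr => z2 _ do rewrite AB.
under eq_bigr => z1 _ do rewrite exchange_big.
rewrite exchange_big; apply: eq_bigr => v _.
rewrite !ent_embed !ent_ptrace !mulr_suml; apply: eq_bigr => z1 _.
by rewrite mulr_sumr; apply: eq_bigr => z2 _; rewrite mulrA.
Qed.

End PartialTraceSplit.

Lemma ptrace_embed_mulmx_splitC (U T1 T2 J1 J2 : finType) (i1 : T1 -> U) (i2 : T2 -> U)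
    (Y1 : Op F d (T1 + J1)%type) (Y2 : Op F d (T2 + J2)%type) :
  ptrace (embed (map_sum i2 (@inr J1 J2)) Y2 *m embed (map_sum i1 (@inl J1 J2)) Y1) =
  embed i2 (ptrace Y2) *m embed i1 (ptrace Y1).
Proof.
apply: trmx_inj; rewrite -ptrace_trmx !trmx_mul -!embed_trmx.
by rewrite ptrace_embed_mulmx_split !ptrace_trmx.
Qed.

(* The gauge factors [D i] telescope, and the partial trace removes the conjugation by
   [embed inr (D 0)] that is left over. *)
Lemma ptrace_prod_gauge (S1 S2 : finType) n
    (X Y : 'I_n -> Op F d (S1 + S2)%type) (D : nat -> Op F d S2) :
  (forall i, D i \in unitmx) -> D n = D 0%N ->
  (forall i : 'I_n, X i *m embed inr (D i.+1) = embed inr (D i) *m Y i) ->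
  ptrace (\big[mulmx/1%:M]_(i < n) X i) = ptrace (\big[mulmx/1%:M]_(i < n) Y i).
Proof.
move=> uD Dn XY; have uE i := embed_unitmx (@inr_inj S1 S2) (uD i).
rewrite (prod_mulmx_telescope (Y := Y) (D := fun i => embed inr (D i))) // Dn.
by rewrite -mulmxA ptrace_embed_inrC -mulmxA mulVmx ?mulmx1.
Qed.

End TensorOperators.

(** * Trace reduction of the bicolored tetrahedron equation *)

Lemma colrN s k : colr (~~ s) k = ~~ colr s k.
Proof. by rewrite /colr addNb. Qed.

Lemma colrS s k : colr s k.+1 = ~~ colr s k.
Proof. by rewrite /colr /= addbN. Qed.

Lemma colr_double_succ s n : colr s (2 * n).+1 = colr s 1.
Proof. by rewrite /colr /= oddM andFb. Qed.

(* The factors of trace reductions over three planes a < b < c above all the planes 1_l are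
   labelled by (I + I) + I, with V_(1_l a) = inl (inl l), V_(1_l b) = inl (inr l) and
   V_(1_l c) = inr l; these maps place the output of [traceRed] for the pairs ab, ac, bc. *)
Definition slot_ab (T : Type) : T + T -> (T + T) + T := inl.
Definition slot_ac (T : Type) : T + T -> (T + T) + T := map_sum inl id.
Definition slot_bc (T : Type) : T + T -> (T + T) + T := map_sum inr id.

Section TraceReduction.
Variables (F : fieldType) (d : nat) (P : Type) (L : nat).
Variables (Rf Rd Rdd Rddd : opfamily F d P) (r1 : 'I_(2 * L) -> P).
Hypothesis BTE_R : forall s, BTE Rf Rd Rdd Rddd s.
Hypothesis Rddd_unit : forall s a b c, Rddd s a b c \in unitmx.

Local Notation I := 'I_(2 * L).
Local Notation U := ((I + I) + I)%type.
(* the spaces V_(ab), V_(ac), V_(bc) *)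
Local Notation K := ((unit + unit) + unit)%type.

(* The six spaces of the tetrahedron 1_l < a < b < c, labelled as in [BTE]. *)
Definition tetra_slot (l : I) (i : 'I_6) : U + K :=
  match val i with
  | 0 => inl (inl (inl l)) | 1 => inl (inl (inr l)) | 2 => inl (inr l)
  | 3 => inr (inl (inl tt)) | 4 => inr (inl (inr tt)) | _ => inr (inr tt)
  end.

Lemma tetra_slot_inj l : injective (tetra_slot l).
Proof.
pose code (x : U + K) : nat :=
  match x with
  | inl (inl (inl _)) => 0 | inl (inl (inr _)) => 1 | inl (inr _) => 2
  | inr (inl (inl _)) => 3 | inr (inl (inr _)) => 4 | inr (inr _) => 5
  end.
have codeK i : code (tetra_slot l i) = i by case: i => -[|[|[|[|[|[|?]]]]]].
by move=> i j /(congr1 code); rewrite !codeK => /val_inj.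
Qed.

Definition slot_D (i : 'I_3) : K :=
  match val i with 0 => inl (inl tt) | 1 => inl (inr tt) | _ => inr tt end.

Lemma slot_D_inj : injective slot_D.
Proof. by case=> -[|[|[|?]]] ? [[|[|[|?]]] ?] //= _; apply: val_inj. Qed.

Let pAB := map_sum (@id U) (@inl (unit + unit) unit).
Let pA := map_sum (@slot_ab I) (@inl unit unit).
Let pB := map_sum (@slot_ac I) (@inr unit unit).
Let pC := map_sum (@slot_bc I) (@inr (unit + unit) unit).

(* The slots of the faces 1_l a b, 1_l a c and 1_l b c, factored so that the partial trace over
   K splits by [ptrace_embed_mulmx_split]. *)
Let eA l := pAB \o (pA \o placeR l).
Let eB l := pAB \o (pB \o placeR l).
Let eC l := pC \o placeR l.

Ltac slot_cases := case=> -[|[|[|?]]] ?; rewrite /= /tetra_slot /tri /i6 /= ?inordK.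

Lemma tetra_slotA l : tetra_slot l \o tri (i6 0) (i6 1) (i6 3) =1 eA l.
Proof. by slot_cases. Qed.
Lemma tetra_slotB l : tetra_slot l \o tri (i6 0) (i6 2) (i6 4) =1 eB l.
Proof. by slot_cases. Qed.
Lemma tetra_slotC l : tetra_slot l \o tri (i6 1) (i6 2) (i6 5) =1 eC l.
Proof. by slot_cases. Qed.
Lemma tetra_slotD l : tetra_slot l \o tri (i6 3) (i6 4) (i6 5) =1 inr \o slot_D.
Proof. by slot_cases. Qed.

Ltac disjoint_cases := move=> ? [[|[|[|?]]] ?] [[|[|[|?]]] ?] //=.

Lemma eA_eB_disjoint i j : i != j -> forall a b, eA i a != eB j b.
Proof. by disjoint_cases. Qed.
Lemma eA_eC_disjoint i j : i != j -> forall a b, eA i a != eC j b.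
Proof. by disjoint_cases. Qed.
Lemma eB_eC_disjoint i j : i != j -> forall a b, eB i a != eC j b.
Proof. by disjoint_cases. Qed.

Let opA c l ra rb := embed (eA l) (Rf c (r1 l) ra rb).
Let opB c l ra rc := embed (eB l) (Rd c (r1 l) ra rc).
Let opC c l rb rc := embed (eC l) (Rdd c (r1 l) rb rc).
Let opD c ra rb rc : Op F d K := embed slot_D (Rddd c ra rb rc).

Lemma BTE_slot c l ra rb rc :
  opA c l ra rb *m opB (~~ c) l ra rc *m opC c l rb rc *m embed inr (opD (~~ c) ra rb rc) =
  embed inr (opD c ra rb rc) *m opC (~~ c) l rb rc *m opB c l ra rc *m opA (~~ c) l ra rb.
Proof.
have := congr1 (embed (tetra_slot l)) (BTE_R c (r1 l) ra rb rc).
rewrite /at123 /at124 /at134 /at234 !embed_mulmx ?embed_comp //;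
  try exact: tetra_slot_inj; try exact: inr_inj.
rewrite !(embed_ext _ (tetra_slotA l)) !(embed_ext _ (tetra_slotB l)).
by rewrite !(embed_ext _ (tetra_slotC l)) !(embed_ext _ (tetra_slotD l)) => ->.
Qed.

Lemma opAB_comm i j c c' ra rb ra' rc : i != j ->
  opA c i ra rb *m opB c' j ra' rc = opB c' j ra' rc *m opA c i ra rb.
Proof. by move/eA_eB_disjoint; apply: embed_disjoint_comm. Qed.
Lemma opAC_comm i j c c' ra rb rb' rc : i != j ->
  opA c i ra rb *m opC c' j rb' rc = opC c' j rb' rc *m opA c i ra rb.
Proof. by move/eA_eC_disjoint; apply: embed_disjoint_comm. Qed.
Lemma opBC_comm i j c c' ra rc rb rc' : i != j ->
  opB c i ra rc *m opC c' j rb rc' = opC c' j rb rc' *m opB c i ra rc.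
Proof. by move/eB_eC_disjoint; apply: embed_disjoint_comm. Qed.

Let pAB_inj : injective pAB := map_sum_inj (@inj_id _) inl_inj.
Let pA_inj : injective pA := map_sum_inj inl_inj inl_inj.
Let pB_inj : injective pB := map_sum_inj (map_sum_inj inl_inj (@inj_id _)) inr_inj.
Let pC_inj : injective pC := map_sum_inj (map_sum_inj inr_inj (@inj_id _)) inr_inj.

Lemma ptrace_faces (A B C : Op F d ((I + I) + unit)%type) :
  ptrace (embed pAB (embed pA A *m embed pB B) *m embed pC C) =
  embed (@slot_ab I) (ptrace A) *m embed (@slot_ac I) (ptrace B) *m embed (@slot_bc I) (ptrace C).
Proof. by rewrite ptrace_embed_mulmx_split embed_id ptrace_embed_mulmx_split. Qed.

Lemma ptrace_faces_rev (A B C : Op F d ((I + I) + unit)%type) :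
  ptrace (embed pC C *m embed pAB (embed pB B *m embed pA A)) =
  embed (@slot_bc I) (ptrace C) *m embed (@slot_ac I) (ptrace B) *m embed (@slot_ab I) (ptrace A).
Proof. by rewrite ptrace_embed_mulmx_splitC embed_id ptrace_embed_mulmx_splitC mulmxA. Qed.

Lemma traceRed_exchange s ra rb rc :
  embed (@slot_ab I) (traceRed Rf s r1 ra rb) *m embed (@slot_ac I) (traceRed Rd (~~ s) r1 ra rc)
    *m embed (@slot_bc I) (traceRed Rdd s r1 rb rc) =
  embed (@slot_bc I) (traceRed Rdd (~~ s) r1 rb rc) *m embed (@slot_ac I) (traceRed Rd s r1 ra rc)
    *m embed (@slot_ab I) (traceRed Rf (~~ s) r1 ra rb).
Proof.
pose c (l : nat) := colr s l.+1; pose c' (l : nat) := colr (~~ s) l.+1.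
have gauge : ptrace (\big[mulmx/1%:M]_(l < 2 * L)
      (opA (c l) l ra rb *m opB (c' l) l ra rc *m opC (c l) l rb rc)) =
    ptrace (\big[mulmx/1%:M]_(l < 2 * L)
      (opC (c' l) l rb rc *m opB (c l) l ra rc *m opA (c' l) l ra rb)).
  apply: (ptrace_prod_gauge (D := fun i => opD (c i) ra rb rc)) => [i||l].
  - exact: (embed_unitmx slot_D_inj (Rddd_unit _ _ _ _)).
  - by rewrite /c colr_double_succ.
  - by rewrite /c' /c [colr s l.+2]colrS colrN BTE_slot !mulmxA.
rewrite !prod_mulmx_split in gauge; last 4 first.
- by move=> i j /ltn_eqF/negbT ij; rewrite opBC_comm.
- by move=> i j /ltn_eqF/negbT ij; rewrite mulmxA opAC_comm // -mulmxA opAB_comm // mulmxA.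
- by move=> i j /ltn_eqF/negbT ij; rewrite opAB_comm // eq_sym.
- move=> i j /ltn_eqF/negbT ij; rewrite eq_sym in ij.
  by rewrite mulmxA -opAC_comm // -mulmxA -opBC_comm // mulmxA.
rewrite !prod_embed_comp // -embed_mulmx // -mulmxA -embed_mulmx // in gauge.
by move: gauge; rewrite ptrace_faces ptrace_faces_rev.
Qed.

End TraceReduction.

(** * Layer transfer matrices *)

Section LayerExchange.
Variables (F : fieldType) (d : nat) (P : Type) (L M : nat).
Variables (Rf Rd Rdd : opfamily F d P) (r1 : 'I_(2 * L) -> P) (r2 : 'I_(2 * M) -> P).
Hypothesis Rdd_unit : forall s r3 r4, traceRed Rdd s r1 r3 r4 \in unitmx.
Hypothesis traceRed_exchangeR : forall s ra rb rc,
  embed (@slot_ab 'I_(2 * L)) (traceRed Rf s r1 ra rb)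
    *m embed (@slot_ac 'I_(2 * L)) (traceRed Rd (~~ s) r1 ra rc)
    *m embed (@slot_bc 'I_(2 * L)) (traceRed Rdd s r1 rb rc) =
  embed (@slot_bc 'I_(2 * L)) (traceRed Rdd (~~ s) r1 rb rc)
    *m embed (@slot_ac 'I_(2 * L)) (traceRed Rd s r1 ra rc)
    *m embed (@slot_ab 'I_(2 * L)) (traceRed Rf (~~ s) r1 ra rb).

Local Notation I := 'I_(2 * L).
Local Notation J := 'I_(2 * M).
Local Notation W := (I * J)%type.
Local Notation K := (I + I)%type.

(* The planes 2_m < 3 < 3' play the roles of a < b < c. *)
Definition layer_slot (m : J) (u : (I + I) + I) : W + K :=
  match u with inl (inl l) => inl (l, m) | inl (inr l) => inr (inl l) | inr l => inr (inr l) end.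

Lemma layer_slot_inj m : injective (layer_slot m).
Proof. by move=> [[l|l]|l] [[l'|l']|l'] //= [] ->. Qed.

Let eP m := map_sum (@id W) (@inl I I) \o placeT m.
Let eQ m := map_sum (@id W) (@inr I I) \o placeT m.

Lemma layer_slot_ab m : layer_slot m \o @slot_ab I =1 eP m.
Proof. by case. Qed.
Lemma layer_slot_ac m : layer_slot m \o @slot_ac I =1 eQ m.
Proof. by case. Qed.
Lemma layer_slot_bc m : layer_slot m \o @slot_bc I =1 inr.
Proof. by case. Qed.

Lemma eP_eQ_disjoint i j : i != j -> forall a b, eP i a != eQ j b.
Proof.
move=> nij [l|l] [l'|l'] /=; rewrite /eP /eQ /= //.
by apply: contra nij => /eqP[_ ->].
Qed.

Let opP c m r := embed (eP m) (traceRed Rf c r1 (r2 m) r).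
Let opQ c m r := embed (eQ m) (traceRed Rd c r1 (r2 m) r).

Lemma traceRed_exchange_slot c m r r' :
  opP c m r *m opQ (~~ c) m r' *m embed inr (traceRed Rdd c r1 r r') =
  embed inr (traceRed Rdd (~~ c) r1 r r') *m opQ c m r' *m opP (~~ c) m r.
Proof.
have := congr1 (embed (layer_slot m)) (traceRed_exchangeR c (r2 m) r r').
rewrite !embed_mulmx ?embed_comp //; try exact: layer_slot_inj.
rewrite !(embed_ext _ (layer_slot_ab m)) !(embed_ext _ (layer_slot_ac m)).
by rewrite !(embed_ext _ (layer_slot_bc m)).
Qed.

Lemma layerT_exchange s r r' :
  layerT Rf s r1 r2 r *m layerT Rd (~~ s) r1 r2 r' =
  layerT Rd s r1 r2 r' *m layerT Rf (~~ s) r1 r2 r.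
Proof.
pose c (m : nat) := colr s m.+1; pose c' (m : nat) := colr (~~ s) m.+1.
have gauge : ptrace (\big[mulmx/1%:M]_(m < 2 * M) (opP (c m) m r *m opQ (c' m) m r')) =
             ptrace (\big[mulmx/1%:M]_(m < 2 * M) (opQ (c m) m r' *m opP (c' m) m r)).
  apply: (ptrace_prod_gauge (D := fun i => traceRed Rdd (~~ c i) r1 r r')) => [i||m].
  - exact: Rdd_unit.
  - by rewrite /c colr_double_succ.
  - by rewrite /c' /c [colr s m.+2]colrS negbK colrN traceRed_exchange_slot mulmxA.
rewrite !prod_mulmx_split in gauge; last 2 first.
- by move=> i j /ltn_eqF/negbT ij; apply: embed_disjoint_comm; exact: eP_eQ_disjoint.
- move=> i j /ltn_eqF/negbT ij; rewrite eq_sym in ij.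
  by apply/esym/embed_disjoint_comm; exact: eP_eQ_disjoint.
move: gauge; rewrite !prod_embed_comp;
  try exact: map_sum_inj (@inj_id _) inl_inj; try exact: map_sum_inj (@inj_id _) inr_inj.
by rewrite ptrace_embed_mulmx_split ptrace_embed_mulmx_splitC !embed_id; apply.
Qed.

End LayerExchange.

Lemma twoLayerT_comm (F : fieldType) d (P : Type) L M (X Y : opfamily F d P)
    (r1 : 'I_(2 * L) -> P) (r2 : 'I_(2 * M) -> P) :
  (forall s r r', layerT X s r1 r2 r *m layerT Y (~~ s) r1 r2 r' =
                  layerT Y s r1 r2 r' *m layerT X (~~ s) r1 r2 r) ->
  forall a a' b b', comm_mx (twoLayerT X r1 r2 a a') (twoLayerT Y r1 r2 b b').
Proof.
move=> exch a a' b b'; have exch0 := exch false; have exch1 := exch true; rewrite /= in exch0 exch1.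
rewrite /comm_mx /twoLayerT -!mulmxA (mulmxA (layerT X true _ _ a')) exch1.
rewrite -mulmxA (mulmxA (layerT X false _ _ a)) exch0 -!mulmxA exch0.
by rewrite (mulmxA (layerT X true _ _ a)) exch1 !mulmxA.
Qed.

Unset Implicit Arguments.

Theorem mainTheorem3 (R : realType) (d : nat) (P : Type) (L M : nat)
    (hL : (0 < L)%N) (hM : (0 < M)%N)
    (Rf Rd Rdd Rddd : opfamily (Cx R) d P)
    (r1 : 'I_(2 * L) -> P) (r2 : 'I_(2 * M) -> P)
    (hBTE : forall s : bool, BTE Rf Rd Rdd Rddd s)
    (hRddd : forall (s : bool) (a b c : P), Rddd s a b c \in unitmx)
    (hRdd : forall (s : bool) (r3 r4 : P), traceRed Rdd s r1 r3 r4 \in unitmx)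
    (hdiag : exists t t' : P, diag_simple (twoLayerT Rd r1 r2 t t')) :
  forall r r' s s' : P,
    twoLayerT Rf r1 r2 r r' *m twoLayerT Rf r1 r2 s s'
    = twoLayerT Rf r1 r2 s s' *m twoLayerT Rf r1 r2 r r'.
Proof.
move=> r r' s s'; have [t [t' simple_t]] := hdiag.
have exch := layerT_exchange r2 hRdd (traceRed_exchange r1 hBTE hRddd).
have commT := twoLayerT_comm exch.
by apply: (diag_simple_comm simple_t); apply/esym/commT.
Qed.
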